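(* Let $(I,\preceq)$ be a finite poset with $|I|=n$, for each $i\in I$ let $X_i$ be a finite set with $|X_i|\ge 2$, let $\{p_i^0\}_{i\in I}$ be a strict probability measure on $I$, and let $\mathcal{P}$ be the generalized crested product defined by $(I,\preceq)$ and $\{p_i^0\}$ in which every factor chain is the uniform chain $U_i$ on $X_i$. Let $R\subseteq I$ and let $\widetilde{\mathcal{P}}$ be the lumped chain of $\mathcal{P}$ with respect to the partition of $X=\prod_{i\in I}X_i$ into classes of the relation $x\sim y\iff x_i=y_i$ for all $i\in I\setminus R$ (this chain is lumpable with respect to that partition); identify each class with the common value $(x_i)_{i\in I\setminus R}\in\prod_{i\in I\setminus R}X_i$. Then $$\widetilde{\mathcal{P}}=\sum_{i\in I}p_i^0\left(\bigotimes_{j\in H[i]\setminus R}U_j\right)\otimes\left(\bigotimes_{j\notin (H[i]\cup R)}I_j\right),$$ i.e. for $u,v\in\prod_{j\in I\setminus R}X_j$, $\widetilde{p}(u,v)=\sum_{i\in I}p_i^0\prod_{j\in H[i]\setminus R}\frac{1}{|X_j|}\prod_{j\in I\setminus (H[i]\cup R)}\delta(u_j,v_j)$.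
   Context: $H(i)=\{j\in I: j\prec i\}$, $H[i]=H(i)\sqcup\{i\}$. $U_j$ is the uniform Markov operator on $X_j$ (all matrix entries $1/|X_j|$), $I_j$ the identity operator on $X_j$, and $\delta$ the Kronecker delta. The generalized crested product with uniform factors is the Markov chain on $X$ with transition probabilities $p(x,y)=\sum_{i\in I}p_i^0\prod_{j\in H[i]}\frac{1}{|X_j|}\prod_{j\notin H[i]}\delta(x_j,y_j)$, i.e. operator $\sum_{i}p_i^0(\bigotimes_{j\in H[i]}U_j)\otimes(\bigotimes_{j\notin H[i]}I_j)$. If a chain $p$ is lumpable w.r.t. a partition $\mathcal{L}$ (i.e. $x\mapsto\sum_{y\in L'}p(x,y)$ is constant on each part $L$ for every part $L'$), the lumped chain on $\mathcal{L}$ has transition probabilities $\widetilde p(L,L')=\sum_{y\in L'}p(x,y)$ for any $x\in L$. *)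

From HB Require Import structures.
From mathcomp Require Import all_boot all_order all_algebra.
Set Implicit Arguments. Unset Strict Implicit. Unset Printing Implicit Defensive.
Import Order.TTheory GRing.Theory Num.Theory.
Local Open Scope ring_scope.

Definition config (I : finType) (X : I -> finType) :=
  {dffun forall i : I, X i}.

Definition strict_prob (R : numDomainType) (I : finType) (p0 : I -> R) :=
  (forall i, 0 < p0 i) /\ \sum_(i : I) p0 i = 1.

(* Generalized crested product with uniform factors:
   p(x,y) = sum_i p0_i prod_{j in H[i]} 1/|X_j| prod_{j notin H[i]} delta(x_j,y_j),
   where H[i] = {j | j <= i}. *)
Definition crested_uniform (R : fieldType) (d : Order.disp_t) (I : finPOrderType d)
  (X : I -> finType) (p0 : I -> R) (x y : config X) : R :=
  \sum_(i : I) p0 i *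
     (\prod_(j : I | (j <= i)%O) (#|X j|%:R)^-1) *
     (\prod_(j : I | ~~ (j <= i)%O) (x j == y j)%:R).

Definition subI (I : finType) (S : {set I}) := {k : I | k \notin S}.

Definition restr_config (I : finType) (X : I -> finType) (S : {set I})
  (x : config X) : {dffun forall j : subI S, X (sval j)} :=
  @finfun (subI S) (fun j => X (sval j)) (fun j => x (sval j)).

(* Lumpability of a chain p on T with respect to the partition into fibers of f
   (classes identified with values of f). *)
Definition lumpable (R : nmodType) (T : finType) (U : eqType)
  (p : T -> T -> R) (f : T -> U) :=
  forall x x' (v : U), f x = f x' ->
    \sum_(y : T | f y == v) p x y = \sum_(y : T | f y == v) p x' y.

From HB Require Import structures.
From mathcomp Require Import all_boot all_order all_algebra.
Import Order.TTheory GRing.Theory Num.Theory.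
Local Open Scope ring_scope.
Set Implicit Arguments. Unset Strict Implicit. Unset Printing Implicit Defensive.

(* For a fixed index i the i-th summand of the crested product is a product over
   the coordinates of 0/1 factors and constants, so its sum over the fibre
   {y | y = v off R} counts a product set and factors coordinatewise.  A
   coordinate in R is free: below i its |X_j| choices cancel the weight
   1/|X_j|, otherwise it is pinned to x_j.  A coordinate outside R is pinned
   to v_j, leaving 1/|X_j| below i and delta(x_j, v_j) otherwise.  The result
   depends on x only through its restriction, which is lumpability. *)

Lemma big_subI (R : Type) (idx : R) (op : Monoid.com_law idx) (I : finType)
  (S : {set I}) (P : pred I) (g : I -> R) :
  \big[op/idx]_(k : subI S | P (sval k)) g (sval k) =
  \big[op/idx]_(j | (j \notin S) && P j) g j.
Proof. exact: (esym (big_sub_cond [predC S] P g)). Qed.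

Lemma prod_indicator (F : comNzSemiRingType) (T : finType) (b : pred T) :
  \prod_(t : T) ((b t)%:R : F) = [forall t, b t]%:R.
Proof.
case: (boolP [forall t, b t]) => [/forallP bT | /forallPn[t /negbTE bt]].
  by rewrite big1 // => t _; rewrite bT.
by rewrite (bigD1 t) //= bt mul0r.
Qed.

Lemma card_pinned (T : finType) (free1 free2 : bool) (c b : T) :
  #|[pred a : T | (free1 || (a == c)) && (free2 || (b == a))]| =
  if free1 then (if free2 then #|T| else 1%N) else if free2 then 1%N else (b == c).
Proof.
case: free1; case: free2 => /=.
- exact: eq_card.
- by rewrite -(card1 b); apply: eq_card => a; rewrite !inE eq_sym.
- by rewrite -(card1 c); apply: eq_card => a; rewrite !inE ?andbT.
case: (b =P c) => [<- | neq].
  by rewrite -[RHS]/1%N -(card1 b); apply: eq_card => a; rewrite !inE eq_sym andbb.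
apply: eq_card0 => a; rewrite !inE.
by apply/andP => -[/eqP-> /eqP/neq].
Qed.

Section Splice.
Variables (I : finType) (X : I -> finType) (S : {set I}).
Variables (x : config X) (v : {dffun forall j : subI S, X (sval j)}).

(* On S, where v says nothing, x serves as an arbitrary filler. *)
Definition splice (j : I) : X j :=
  if (j \notin S) =P true is ReflectT h then v (exist _ j h) else x j.

Lemma spliceE (k : subI S) : splice (sval k) = v k.
Proof.
case: k => j hj; rewrite /splice /=; case: eqP => [h|//].
by rewrite (bool_irrelevance h hj).
Qed.

Lemma restr_configE (y : config X) :
  (restr_config S y == v) = [forall j, (j \in S) || (y j == splice j)].
Proof.
apply/eqP/forallP => [yv j | yv].
  case: (boolP (j \in S)) => //= h.
  have := spliceE (exist _ j h); rewrite -yv ffunE /= => ->.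
  by rewrite eqxx.
apply/ffunP => k; rewrite ffunE -spliceE.
by case: k => j /= hj; move: (yv j); rewrite (negbTE hj) => /eqP.
Qed.

Lemma sum_fiber_indicator (F : comNzSemiRingType) (P : forall j, pred (X j)) :
  \sum_(y : config X | restr_config S y == v) \prod_j ((P j (y j))%:R : F) =
  \prod_j (#|[pred a | ((j \in S) || (a == splice j)) && P j a]|%:R).
Proof.
pose Fam j := [pred a | ((j \in S) || (a == splice j)) && P j a].
transitivity (\sum_(y in (family Fam : simpl_pred (config X))) (1 : F)).
  rewrite big_mkcond [RHS]big_mkcond; apply: eq_bigr => y _.
  have famE : (y \in family Fam) =
      [forall j, (j \in S) || (y j == splice j)] && [forall j, P j (y j)].
    apply/familyP/andP => [yF | [/forallP yS /forallP yP] j].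
      by split; apply/forallP => j; have /andP[] := yF j.
    by rewrite inE yS yP.
  by rewrite prod_indicator restr_configE famE; do 2!case: forallP.
by rewrite sumr_const card_family foldrE big_image natr_prod.
Qed.
End Splice.

Section LumpedCrested.
Variables (F : numFieldType) (d : Order.disp_t) (I : finPOrderType d).
Variables (X : I -> finType) (S : {set I}) (p0 : I -> F).
Hypothesis X_gt0 : forall j, (0 < #|X j|)%N.
Variables (x : config X) (v : {dffun forall j : subI S, X (sval j)}).

Lemma sum_fiber_crested_uniform :
  \sum_(y : config X | restr_config S y == v) crested_uniform p0 x y =
  \sum_(i : I) p0 i *
    (\prod_(k : subI S | (sval k <= i)%O) (#|X (sval k)|%:R)^-1) *
    (\prod_(k : subI S | ~~ (sval k <= i)%O) (restr_config S x k == v k)%:R).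
Proof.
rewrite /crested_uniform exchange_big; apply: eq_bigr => i _.
rewrite -mulr_sumr -!mulrA; congr (_ * _).
have weightE (y : config X) : \prod_(j | ~~ (j <= i)%O) ((x j == y j)%:R : F) =
    \prod_j (((j <= i)%O || (x j == y j))%:R).
  by rewrite [LHS]big_mkcond; apply: eq_bigr => j _; case: (j <= i)%O.
under [X in _ * X = _]eq_bigr => y _ do rewrite weightE.
rewrite (@sum_fiber_indicator _ _ _ x v F (fun j a => (j <= i)%O || (x j == a))).
under eq_bigr => j _ do rewrite card_pinned.
under [X in _ = _ * X]eq_bigr => k _ do rewrite ffunE -(spliceE x v k).
rewrite (big_subI _ S (fun j => (j <= i)%O) (fun j => (#|X j|%:R : F)^-1)).
rewrite (big_subI _ S (fun j => ~~ (j <= i)%O) (fun j => ((x j == splice x v j)%:R : F))).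
rewrite big_mkcond [in RHS]big_mkcond [X in _ = _ * X]big_mkcond -!big_split /=.
apply: eq_bigr => j _.
case: (j \in S); case: (j <= i)%O; rewrite /= ?mulr1 ?mul1r //.
by rewrite mulVf // pnatr_eq0 -lt0n.
Qed.
End LumpedCrested.

Theorem proposition4 (F : realFieldType) (d : Order.disp_t) (I : finPOrderType d)
  (X : I -> finType) (hX : forall i, (1 < #|X i|)%N)
  (p0 : I -> F) (hp0 : strict_prob p0) (R : {set I}) :
  lumpable (crested_uniform p0) (@restr_config I X R) /\
  forall (u v : {dffun forall j : subI R, X (sval j)}) (x : config X),
    restr_config R x = u ->
    \sum_(y : config X | restr_config R y == v) crested_uniform p0 x y =
    \sum_(i : I) p0 i *
      (\prod_(j : subI R | (sval j <= i)%O) (#|X (sval j)|%:R)^-1) *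
      (\prod_(j : subI R | ~~ (sval j <= i)%O) (u j == v j)%:R).
Proof.
have X_gt0 j : (0 < #|X j|)%N by apply: ltnW.
split=> [x x' v xx' | u v x <-]; last exact: sum_fiber_crested_uniform.
by rewrite !sum_fiber_crested_uniform // xx'.
Qed.
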